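(* Let $\varphi:\Lambda\to\Gamma$ be a regular covering map of finite simplicial graphs with $\Gamma$ and $\Lambda$ connected. Let $v$ be a vertex of $\Gamma$, $B$ a connected component of $\Gamma\setminus\mathrm{st}(v)$, $\tilde B$ a connected component of $\varphi^{-1}(B)$, and $D=\bigcap_{u\in\varphi^{-1}(v)}C(u,\tilde B)$. Then either $\varphi^{-1}(B)\subseteq D$, or $C(u,\tilde B)=D$ for a vertex $u\in\varphi^{-1}(v)$ whose star is adjacent to $\tilde B$.
   Context: Graphs are finite simplicial graphs; subgraphs are induced. $\mathrm{st}(u)$ is the subgraph induced by $u$ and its neighbours. A covering map $\varphi:\Lambda\to\Gamma$ is a surjective simplicial map mapping the neighbours of each vertex $u$ bijectively onto the neighbours of $\varphi(u)$; regular means the group of graph automorphisms $\mu$ of $\Lambda$ with $\varphi\mu=\varphi$ acts transitively on each fiber. For a vertex $u$ of $\Lambda$ and a connected subgraph $A$ of $\Lambda$ disjoint from $\mathrm{st}(u)$, $C(u,A)$ denotes the component of $\Lambda\setminus\mathrm{st}(u)$ containing $A$. Two disjoint subgraphs are adjacent if some edge has one endpoint in each. *)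

From mathcomp Require Import all_boot.
Set Implicit Arguments. Unset Strict Implicit. Unset Printing Implicit Defensive.

Definition simple_graph (T : finType) (e : rel T) : Prop :=
  irreflexive e /\ symmetric e.

Definition connected_graph (T : finType) (e : rel T) : Prop :=
  forall x y, connect e x y.

Definition restrict (T : finType) (e : rel T) (S : {set T}) : rel T :=
  [rel x y | [&& x \in S, y \in S & e x y]].

(* Vertex set of the component of the induced subgraph on S containing x
   (empty if x \notin S). *)
Definition comp (T : finType) (e : rel T) (S : {set T}) (x : T) : {set T} :=
  [set y in S | connect (restrict e S) x y].

Definition is_component (T : finType) (e : rel T) (S A : {set T}) : Prop :=
  exists2 x, x \in S & A = comp e S x.

Definition st (T : finType) (e : rel T) (u : T) : {set T} :=
  [set w | (w == u) || e u w].

(* C(u,A): component(s) of  Lambda \ st(u)  meeting A (for A connected and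
   disjoint from st(u), this is the unique component containing A). *)
Definition Ccomp (T : finType) (e : rel T) (u : T) (A : {set T}) : {set T} :=
  \bigcup_(a in A) comp e (~: st e u) a.

Definition adjacent (T : finType) (e : rel T) (X Y : {set T}) : bool :=
  [exists x in X, exists y in Y, e x y].

Definition is_covering (V W : finType) (eL : rel V) (eG : rel W) (phi : V -> W) : Prop :=
  [/\ (forall y, exists x, phi x = y),
      (forall x y, eL x y -> eG (phi x) (phi y)),
      (forall u, {in [set w | eL u w] &, injective phi}) &
      (forall u, phi @: [set w | eL u w] = [set w | eG (phi u) w])].

Definition graph_aut (V : finType) (eL : rel V) (mu : V -> V) : Prop :=
  bijective mu /\ (forall x y, eL (mu x) (mu y) = eL x y).

Definition is_regular_covering (V W : finType) (eL : rel V) (eG : rel W) (phi : V -> W) : Prop :=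
  is_covering eL eG phi /\
  (forall x y, phi x = phi y ->
     exists mu, [/\ graph_aut eL mu, (forall z, phi (mu z) = phi z) & mu x = y]).

From mathcomp Require Import all_boot.
Set Implicit Arguments. Unset Strict Implicit. Unset Printing Implicit Defensive.

(* Let U be the fibre over v. Every vertex adjacent to \tilde B but outside it
   lies in the star of a vertex of U, so some such star is adjacent to \tilde B.
   If only the star of u0 is, \tilde B is a whole component of Lambda \ st(u0),
   hence C(u0, \tilde B) = \tilde B, which lies in D.
   If two stars are, deck transformations show that each component of
   phi^-1(B) is adjacent to the star of some w in U other than any given u, and
   then phi^-1(B) lies in one component of Lambda \ st(u) for every u in U.
   To see the latter, take a counterexample (u, y) whose component K of y in
   Lambda \ st(u) is smallest, and such a w for y: st(w) lies in K, and every
   vertex outside K is joined to u outside K, so all of Lambda \ K lies in one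
   component of Lambda \ st(w). A deck transformation moving u to w gives a
   counterexample at w, one of whose two components avoids Lambda \ K; it is
   then contained in K minus w, contradicting minimality. *)

Lemma connect_ind (T : finType) (r : rel T) (P : T -> Prop) x y :
  (forall a b, r a b -> P a -> P b) -> P x -> connect r x y -> P y.
Proof.
move=> rP Px /connectP[p rp ->]; elim: p x Px rp => //= a p IHp x Px /andP[rxa].
exact: IHp (rP _ _ rxa Px).
Qed.

Lemma connect_homo (T T' : finType) (r : rel T) (r' : rel T') (f : T -> T') x y :
  (forall a b, r a b -> r' (f a) (f b)) -> connect r x y -> connect r' (f x) (f y).
Proof.
move=> rf; apply: (connect_ind (P := fun z => connect r' (f x) (f z))) => //.
by move=> a b /rf r'ab cfa; apply: connect_trans cfa (connect1 r'ab).
Qed.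

Lemma connect_exists_boundary (T : finType) (r : rel T) (A : {pred T}) x y :
  x \in A -> y \notin A -> connect r x y ->
  exists a b, [/\ a \in A, b \notin A & r a b].
Proof.
move=> xA yA /connectP[p rp yE]; rewrite {y}yE in yA.
elim: p x xA rp yA => [x xA _ /=|b p IHp x xA /= /andP[rxb rp] yA].
  by rewrite xA.
have [bA|bA] := boolP (b \in A); first exact: IHp bA rp yA.
by exists x, b.
Qed.

Lemma adjacentP (T : finType) (e : rel T) (X Y : {set T}) :
  reflect (exists a b, [/\ a \in X, b \in Y & e a b]) (adjacent e X Y).
Proof.
apply: (iffP existsP) => [[a /andP[aX /existsP[b /andP[bY eab]]]] | ].
  by exists a, b.
case=> a [b [aX bY eab]].
by exists a; rewrite aX; apply/existsP; exists b; rewrite bY.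
Qed.

Section InducedSubgraph.

Variables (T : finType) (e : rel T).
Hypothesis e_sym : symmetric e.

Lemma restrict_connect_sym (S : {set T}) : connect_sym (restrict e S).
Proof.
by apply: sym_connect_sym => a b; rewrite /restrict /= e_sym andbCA andbA.
Qed.

Lemma connect_restrict_mono (S S' : {set T}) x y :
  S \subset S' -> connect (restrict e S) x y -> connect (restrict e S') x y.
Proof.
move=> sSS'; apply: connect_sub => a b /and3P[aS bS eab].
by apply: connect1; rewrite /restrict /= !(subsetP sSS') ?eab.
Qed.

Lemma st_connect (S : {set T}) w p :
  st e w \subset S -> p \in st e w -> connect (restrict e S) w p.
Proof.
move=> stS pw; have wS : w \in S by rewrite (subsetP stS) // inE eqxx.
move: pw; rewrite inE => /orP[/eqP-> | ewp]; first exact: connect0.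
by apply: connect1; rewrite /restrict /= wS ewp (subsetP stS) // inE ewp orbT.
Qed.

Lemma comp_mono (S S' : {set T}) x : S \subset S' -> comp e S x \subset comp e S' x.
Proof.
move=> sSS'; apply/subsetP => y; rewrite !inE => /andP[yS cxy].
by rewrite (subsetP sSS') //= (connect_restrict_mono sSS').
Qed.

Lemma comp_sub_closed (S A : {set T}) x :
  x \in A -> (forall a b, a \in A -> b \in S -> e a b -> b \in A) ->
  comp e S x \subset A.
Proof.
move=> xA closedA; apply/subsetP => y; rewrite inE => /andP[_].
apply: (connect_ind (P := fun z => z \in A)) xA => a b /and3P[_ bS eab] aA.
exact: closedA bS eab.
Qed.

Lemma comp_is_component (S : {set T}) x : x \in S -> is_component e S (comp e S x).
Proof. by exists x. Qed.

Lemma is_component_nonempty (S A : {set T}) : is_component e S A -> exists x, x \in A.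
Proof. by case=> x xS ->; exists x; rewrite inE xS connect0. Qed.

Lemma is_component_sub (S A : {set T}) : is_component e S A -> A \subset S.
Proof. by case=> x _ ->; apply/subsetP => y; rewrite inE => /andP[]. Qed.

Lemma is_component_closed (S A : {set T}) a b :
  is_component e S A -> a \in A -> b \in S -> e a b -> b \in A.
Proof.
case=> x _ ->; rewrite !inE => /andP[aS cxa] bS eab.
by rewrite bS (connect_trans cxa) // connect1 // /restrict /= aS bS.
Qed.

Lemma is_component_connect (S A : {set T}) :
  is_component e S A -> {in A &, forall a b, connect (restrict e S) a b}.
Proof.
case=> x _ -> a b; rewrite !inE => /andP[_ cxa] /andP[_ cxb].
by rewrite restrict_connect_sym in cxa; apply: connect_trans cxa cxb.
Qed.

Lemma st_sub_component (S C : {set T}) w a b :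
  is_component e S C -> st e w \subset S -> a \in st e w -> b \in C -> e a b ->
  st e w \subset C.
Proof.
move=> Cc stS aw bC eab.
have stwP p : p \in st e w -> (p == w) || e w p by rewrite inE.
have stwS p : p \in st e w -> p \in S := subsetP stS p.
have wS : w \in S by rewrite stwS // inE eqxx.
have aC : a \in C by apply: is_component_closed Cc bC (stwS a aw) _; rewrite e_sym.
have wC : w \in C.
  have /orP[/eqP<- // | ewa] := stwP a aw.
  by apply: is_component_closed Cc aC wS _; rewrite e_sym.
apply/subsetP => p pw; have /orP[/eqP-> // | ewp] := stwP p pw.
exact: is_component_closed Cc wC (stwS p pw) ewp.
Qed.

End InducedSubgraph.

Section GraphAutomorphism.

Variables (T : finType) (e : rel T) (mu : T -> T).
Hypothesis mu_aut : graph_aut e mu.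

Lemma aut_st u p : (mu p \in st e (mu u)) = (p \in st e u).
Proof. by case: mu_aut => /bij_inj mu_inj mu_e; rewrite !inE mu_e (inj_eq mu_inj). Qed.

Lemma aut_connect (S S' : {set T}) x y :
  {homo mu : z / z \in S >-> z \in S'} ->
  connect (restrict e S) x y -> connect (restrict e S') (mu x) (mu y).
Proof.
move=> muS; apply: connect_homo => a b /and3P[aS bS eab].
by rewrite /restrict /= !muS // mu_aut.2.
Qed.

Lemma aut_connect_off_st u x y :
  connect (restrict e (~: st e u)) x y ->
  connect (restrict e (~: st e (mu u))) (mu x) (mu y).
Proof. by apply: aut_connect => z; rewrite !in_setC aut_st. Qed.

Lemma aut_adjacent_st u (A A' : {set T}) :
  {homo mu : z / z \in A >-> z \in A'} ->
  adjacent e (st e u) A -> adjacent e (st e (mu u)) A'.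
Proof.
move=> muA /adjacentP[a [b [au bA eab]]]; apply/adjacentP; exists (mu a), (mu b).
by rewrite aut_st muA // mu_aut.2.
Qed.

End GraphAutomorphism.

Section StarSeparation.

Variables (T : finType) (e : rel T).
Hypotheses (e_sym : symmetric e) (e_conn : connected_graph e).

Lemma connect_off_component u (C : {set T}) p :
  is_component e (~: st e u) C -> p \notin C -> connect (restrict e (~: C)) u p.
Proof.
move=> Cc pC; have stC : st e u \subset ~: C.
  by rewrite -disjoints_subset disjoint_sym disjoints_subset (is_component_sub Cc).
suff [pC'|//] : p \in C \/ connect (restrict e (~: C)) u p by rewrite pC' in pC.
apply: (connect_ind (P := fun z => z \in C \/ connect (restrict e (~: C)) u z))
  (e_conn u p) => [a b eab Pa|]; last by right; apply: connect0.
have [bC|bC] := boolP (b \in C); first by left.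
have [bu|bu] := boolP (b \in st e u); first by right; apply: st_connect.
have [aC|aC] := boolP (a \in C).
  by rewrite (is_component_closed Cc aC _ eab) ?in_setC in bC.
case: Pa => [aC'|cua]; first by rewrite aC' in aC.
right; apply: connect_trans cua (connect1 _).
by rewrite /restrict /= !in_setC aC bC eab.
Qed.

Lemma connect_outside_component u w (C : {set T}) p q :
  is_component e (~: st e u) C -> st e w \subset C -> p \notin C -> q \notin C ->
  connect (restrict e (~: st e w)) p q.
Proof.
move=> Cc stwC pC qC; have CCw : ~: C \subset ~: st e w by rewrite setCS.
apply: (@connect_trans _ _ u).
  rewrite restrict_connect_sym //.
  by apply: connect_restrict_mono CCw _; apply: connect_off_component.
by apply: connect_restrict_mono CCw _; apply: connect_off_component.
Qed.

Variables (F P : {set T}).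
Hypothesis F_stars_disjoint :
  {in F &, forall u w, u != w -> [disjoint st e u & st e w]}.
Hypothesis P_off_F_stars : {in F, forall u, P \subset ~: st e u}.
Hypothesis F_transitive : {in F &, forall u w,
  exists mu, [/\ graph_aut e mu, mu u = w & forall x, (mu x \in P) = (x \in P)]}.
Hypothesis other_star_adjacent : {in P & F, forall y u,
  exists w, [/\ w \in F, w != u & adjacent e (st e w) (comp e P y)]}.

Lemma st_sub_component_off_st u w y :
  u \in F -> w \in F -> w != u -> y \in P -> adjacent e (st e w) (comp e P y) ->
  st e w \subset comp e (~: st e u) y.
Proof.
move=> uF wF wu yP /adjacentP[a [b [aw bPy eab]]].
have PS := P_off_F_stars uF.
apply: st_sub_component (comp_is_component _ (subsetP PS y yP)) _ aw _ eab => //.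
  by rewrite -disjoints_subset disjoint_sym F_stars_disjoint // eq_sym.
by move: bPy; apply/subsetP/comp_mono.
Qed.

Lemma connect_off_F_stars :
  {in F, forall u, {in P &, forall x y, connect (restrict e (~: st e u)) x y}}.
Proof.
suff IH n u y : u \in F -> y \in P -> #|comp e (~: st e u) y| <= n ->
    {in P, forall x, connect (restrict e (~: st e u)) y x}.
  by move=> u uF x y xP; apply: IH uF xP (leqnn _) y.
elim: n u y => [|n IHn] u y uF yP.
  rewrite leqn0 => /eqP/card0_eq/(_ y).
  by rewrite inE (subsetP (P_off_F_stars uF)) ?connect0.
set K := comp e (~: st e u) y => sizeK x xP; apply/idPn => nyx.
have Kc : is_component e (~: st e u) K.
  exact/comp_is_component/(subsetP (P_off_F_stars uF)).
have [w [wF wu adjw]] := other_star_adjacent yP uF.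
have stwK := st_sub_component_off_st uF wF wu yP adjw.
have wK : w \in K by rewrite (subsetP stwK) // inE eqxx.
have [mu [mu_aut muw muP]] := F_transitive wF uF.
have [g mugK gmuK] := mu_aut.1.
have gP z : (g z \in P) = (z \in P) by rewrite -muP gmuK.
have ngyx : ~~ connect (restrict e (~: st e w)) (g y) (g x).
  by apply: contra nyx => /(aut_connect_off_st mu_aut); rewrite muw !gmuK.
have IHw t : t \in P -> comp e (~: st e w) t \subset K ->
    {in P, forall z, connect (restrict e (~: st e w)) t z}.
  move=> tP tK; apply: IHn wF tP _; rewrite -ltnS (leq_trans _ sizeK) //.
  apply: proper_card; rewrite properE tK; apply/subsetPn.
  by exists w => //; rewrite !inE eqxx.
have [yK|/subsetPn[p pc pK]] := boolP (comp e (~: st e w) (g y) \subset K).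
  by rewrite IHw ?gP in ngyx.
have [xK|/subsetPn[q qc qK]] := boolP (comp e (~: st e w) (g x) \subset K).
  by rewrite restrict_connect_sym // IHw ?gP in ngyx.
move/negP: ngyx; apply; move: pc qc; rewrite !inE => /andP[_ cyp] /andP[_ cxq].
apply: connect_trans cyp _; rewrite restrict_connect_sym // in cxq.
exact: connect_trans (connect_outside_component Kc stwK pK qK) cxq.
Qed.

End StarSeparation.

Section RegularCovering.

Variables (V W : finType) (eL : rel V) (eG : rel W) (phi : V -> W).
Hypotheses (eL_sym : symmetric eL) (eL_conn : connected_graph eL).
Hypotheses (eG_irr : irreflexive eG) (eG_sym : symmetric eG).
Hypothesis phi_reg : is_regular_covering eL eG phi.

Lemma cover_surj g : exists x, phi x = g.
Proof. by case: phi_reg => -[]. Qed.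

Lemma cover_edge x y : eL x y -> eG (phi x) (phi y).
Proof. by case: phi_reg => -[_ + _ _] _; apply. Qed.

Lemma cover_lift_edge x g : eG (phi x) g -> exists2 y, eL x y & phi y = g.
Proof.
case: phi_reg => -[_ _ _ phi_nbr] _ exg.
have : g \in phi @: [set y | eL x y] by rewrite phi_nbr inE.
by case/imsetP => y; rewrite inE => exy ->; exists y.
Qed.

Lemma cover_st u p : p \in st eL u -> phi p \in st eG (phi u).
Proof. by rewrite !inE => /orP[/eqP-> | /cover_edge->]; rewrite ?eqxx ?orbT. Qed.

Lemma cover_st_disjoint u w :
  phi u = phi w -> u != w -> [disjoint st eL u & st eL w].
Proof.
case: phi_reg => -[_ _ phi_inj _] _ uw; apply: contraR.
case/pred0Pn => p /andP[]; rewrite !inE => /orP[/eqP-> | eup] /orP[/eqP pw | ewp].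
- by rewrite pw.
- by move: (cover_edge ewp); rewrite uw eG_irr.
- by move: (cover_edge eup); rewrite pw uw eG_irr.
- by apply/eqP/(phi_inj p); rewrite ?inE 1?eL_sym.
Qed.

Lemma cover_deck x y : phi x = phi y ->
  exists mu, [/\ graph_aut eL mu, forall z, phi (mu z) = phi z & mu x = y].
Proof. by case: phi_reg => _; apply. Qed.

Variables (v : W) (B : {set W}) (Bt : {set V}).
Hypotheses (B_comp : is_component eG (~: st eG v) B)
           (Bt_comp : is_component eL (phi @^-1: B) Bt).

Local Notation fiber := (phi @^-1: [set v]).
Local Notation preim_B := (phi @^-1: B).

Lemma preim_off_st u : phi u = v -> preim_B \subset ~: st eL u.
Proof.
move=> uv; apply/subsetP => p; rewrite inE => /(subsetP (is_component_sub B_comp)).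
by rewrite !in_setC; apply: contra => /cover_st; rewrite uv.
Qed.

Lemma Bt_off_st u : phi u = v -> Bt \subset ~: st eL u.
Proof. by move/preim_off_st; apply: subset_trans (is_component_sub Bt_comp). Qed.

Lemma Bt_in_preim z : z \in Bt -> phi z \in B.
Proof. by move/(subsetP (is_component_sub Bt_comp)); rewrite inE. Qed.

Lemma Bt_boundary z y : z \in Bt -> y \notin Bt -> eL z y ->
  exists2 w, phi w = v & y \in st eL w.
Proof.
move=> zBt yBt ezy; have zB := Bt_in_preim zBt.
have : phi y \in st eG v.
  apply: contraR yBt => yv; apply: (is_component_closed Bt_comp zBt _ ezy).
  rewrite inE; apply: is_component_closed B_comp zB _ (cover_edge ezy).
  by rewrite in_setC.
rewrite inE => /orP[/eqP yv | evy].
  by exists y; rewrite ?inE ?eqxx.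
rewrite eG_sym in evy; have [w yw wv] := cover_lift_edge evy.
by exists w; rewrite // inE eL_sym yw orbT.
Qed.

Lemma exists_adjacent_st : exists2 u, phi u = v & adjacent eL (st eL u) Bt.
Proof.
have [x xBt] := is_component_nonempty Bt_comp.
have [f fv] := cover_surj v.
have fBt : f \notin Bt.
  apply/negP => /Bt_in_preim/(subsetP (is_component_sub B_comp)).
  by rewrite fv in_setC inE eqxx.
have [a [b [aBt bBt eab]]] := connect_exists_boundary xBt fBt (eL_conn x f).
have [w wv bw] := Bt_boundary aBt bBt eab.
by exists w => //; apply/adjacentP; exists b, a; rewrite eL_sym.
Qed.

Lemma Bt_sub_Ccomp u : phi u = v -> Bt \subset Ccomp eL u Bt.
Proof.
move=> uv; apply/subsetP => z zBt; apply/bigcupP; exists z => //.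
by rewrite inE (subsetP (Bt_off_st uv)) ?connect0.
Qed.

Lemma Ccomp_sub_Bt u0 : phi u0 = v ->
  (forall w, phi w = v -> adjacent eL (st eL w) Bt -> w = u0) ->
  Ccomp eL u0 Bt \subset Bt.
Proof.
move=> u0v adj_u0; apply/bigcupsP => a aBt; apply: comp_sub_closed aBt _ => p q pBt.
rewrite in_setC => qu0 epq; apply: contraR qu0 => qBt.
have [w wv qw] := Bt_boundary pBt qBt epq.
by rewrite -(adj_u0 w wv) //; apply/adjacentP; exists q, p; rewrite eL_sym.
Qed.

Lemma lift_into_Bt g : g \in B -> exists2 z, z \in Bt & phi z = g.
Proof.
have [x xBt] := is_component_nonempty Bt_comp.
move=> gB; have cxg := is_component_connect eG_sym B_comp (Bt_in_preim xBt) gB.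
apply: (connect_ind (P := fun h => exists2 z, z \in Bt & phi z = h)) cxg;
  last by exists x.
move=> a h /and3P[_ hS eah] [z zBt za]; subst a.
have [z' ezz' phiz'] := cover_lift_edge eah; subst h.
exists z' => //; apply: (is_component_closed Bt_comp zBt _ ezz').
by rewrite inE; apply: is_component_closed B_comp (Bt_in_preim zBt) hS eah.
Qed.

Lemma fiber_stars_disjoint :
  {in fiber &, forall u w, u != w -> [disjoint st eL u & st eL w]}.
Proof.
by move=> u w; rewrite !inE => /eqP uv /eqP wv; apply: cover_st_disjoint; rewrite uv wv.
Qed.

Lemma preim_off_fiber_stars : {in fiber, forall u, preim_B \subset ~: st eL u}.
Proof. by move=> u; rewrite !inE => /eqP; apply: preim_off_st. Qed.

Lemma fiber_transitive : {in fiber &, forall u w, exists mu,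
  [/\ graph_aut eL mu, mu u = w & forall x, (mu x \in preim_B) = (x \in preim_B)]}.
Proof.
move=> u w; rewrite !inE => /eqP uv /eqP wv.
have [mu [mu_aut mu_phi muu]] := cover_deck (etrans uv (esym wv)).
by exists mu; split=> // x; rewrite !inE mu_phi.
Qed.

Lemma other_fiber_star_adjacent u1 u2 : phi u1 = v -> phi u2 = v -> u1 != u2 ->
  adjacent eL (st eL u1) Bt -> adjacent eL (st eL u2) Bt ->
  {in preim_B & fiber, forall y u, exists w,
    [/\ w \in fiber, w != u & adjacent eL (st eL w) (comp eL preim_B y)]}.
Proof.
move=> u1v u2v u12 adj1 adj2 y u; rewrite !inE => yB _.
have [z zBt zy] := lift_into_Bt yB.
have [mu [mu_aut mu_phi muz]] := cover_deck zy.
have [i [iv iu adji]] : exists i, [/\ phi i = v, mu i != u & adjacent eL (st eL i) Bt].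
  have [mu1|] := eqVneq (mu u1) u; last by exists u1.
  by exists u2; rewrite -mu1 (inj_eq (bij_inj mu_aut.1)) eq_sym.
exists (mu i); split=> //; first by rewrite !inE mu_phi iv.
apply: aut_adjacent_st adji => // b bBt.
rewrite inE inE mu_phi Bt_in_preim //= -muz.
apply: aut_connect (is_component_connect eL_sym Bt_comp zBt bBt) => //.
by move=> p; rewrite !inE mu_phi.
Qed.

Lemma Ccomp_eq_bigcap_of_unique_adjacent u0 : phi u0 = v ->
  (forall w, phi w = v -> adjacent eL (st eL w) Bt -> w = u0) ->
  Ccomp eL u0 Bt = \bigcap_(u | phi u == v) Ccomp eL u Bt.
Proof.
move=> u0v adj_u0; apply/eqP; rewrite eqEsubset; apply/andP; split.
  apply: subset_trans (Ccomp_sub_Bt u0v adj_u0) _.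
  by apply/bigcapsP => u /eqP; apply: Bt_sub_Ccomp.
by apply: bigcap_inf; rewrite u0v.
Qed.

Lemma preim_sub_bigcap_of_two_adjacent u1 u2 : phi u1 = v -> phi u2 = v -> u1 != u2 ->
  adjacent eL (st eL u1) Bt -> adjacent eL (st eL u2) Bt ->
  preim_B \subset \bigcap_(u | phi u == v) Ccomp eL u Bt.
Proof.
move=> u1v u2v u12 adj1 adj2.
have preim_conn := connect_off_F_stars eL_sym eL_conn fiber_stars_disjoint
  preim_off_fiber_stars fiber_transitive
  (other_fiber_star_adjacent u1v u2v u12 adj1 adj2).
have [x xBt] := is_component_nonempty Bt_comp.
have xB : x \in preim_B by rewrite inE Bt_in_preim.
apply/subsetP => y yB; apply/bigcapP => u uv; apply/bigcupP; exists x => //.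
have uF : u \in fiber by rewrite !inE.
rewrite inE (subsetP (preim_off_fiber_stars uF)) //=.
exact: preim_conn u uF x y xB yB.
Qed.

End RegularCovering.

Theorem lemma3p7 (V W : finType) (eL : rel V) (eG : rel W) (phi : V -> W)
  (hL : simple_graph eL) (hG : simple_graph eG)
  (cL : connected_graph eL) (cG : connected_graph eG)
  (hphi : is_regular_covering eL eG phi)
  (v : W) (B : {set W}) (Bt : {set V})
  (hB : is_component eG (~: st eG v) B)
  (hBt : is_component eL (phi @^-1: B) Bt) :
  let D := \bigcap_(u | phi u == v) Ccomp eL u Bt in
  (phi @^-1: B \subset D) \/
  (exists u, [/\ phi u = v, Ccomp eL u Bt = D & adjacent eL (st eL u) Bt]).
Proof.
move=> D; rewrite {}/D; have [[_ symL] [irrG symG]] := (hL, hG).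
have [u0 u0v adj0] := exists_adjacent_st symL cL symG hphi hB hBt.
have [/existsP[w /and3P[/eqP wv wu0 adjw]] | no_other] :=
  boolP [exists w, [&& phi w == v, w != u0 & adjacent eL (st eL w) Bt]].
  left; exact: (preim_sub_bigcap_of_two_adjacent symL cL irrG symG hphi hB hBt
                 wv u0v wu0 adjw adj0).
right; exists u0; split=> //.
apply: (Ccomp_eq_bigcap_of_unique_adjacent symL symG hphi hB hBt u0v) => w wv adjw.
by apply: contraNeq no_other => wu0; apply/existsP; exists w; rewrite wv eqxx wu0.
Qed.
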